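(* Let $G$ be a Lie group, $H\subseteq G$ a closed subgroup, and $\mathfrak{g}=\mathfrak{h}\oplus\mathfrak{m}$ a reductive decomposition. Equip $G/H$ with a $G$-invariant Riemannian metric (an $\mathrm{Ad}(H)$-invariant inner product $\langle\cdot,\cdot\rangle$ on $\mathfrak{m}$) with Levi-Civita connection $\nabla$. If $G/H$ admits a $G$-invariant essential Codazzi tensor field $A$, then the non-associative algebra $(\mathfrak{m},[\cdot,\cdot]_{\mathfrak{m}})$ is neither nilpotent nor split-solvable.
   Context: A reductive decomposition means $\mathfrak{m}$ is an $\mathrm{Ad}(H)$-invariant vector space complement of $\mathfrak{h}$ in $\mathfrak{g}$; $[X,Y]_{\mathfrak{m}}$ is the $\mathfrak{m}$-component of $[X,Y]$ in $\mathfrak{g}=\mathfrak{h}\oplus\mathfrak{m}$. $G$-invariant tensor fields on $G/H$ correspond to $\mathrm{Ad}(H)$-invariant tensors on $\mathfrak{m}\cong T_{eH}(G/H)$. A Codazzi tensor field is a symmetric twice-covariant tensor field $A$ with $(\nabla_XA)(Y,Z)=(\nabla_YA)(X,Z)$ for all vector fields $X,Y,Z$. A $G$-invariant Codazzi tensor field $A$ is called essential if $\nabla A\neq 0$ and none of the eigenspaces $\mathfrak{m}_i$ of $A$ on $\mathfrak{m}$ (relative to $\langle\cdot,\cdot\rangle$) is an ideal of $(\mathfrak{m},[\cdot,\cdot]_{\mathfrak{m}})$. A non-associative algebra $\mathfrak{a}$ is nilpotent if there is a positive integer $t$ such that every product of $t$ elements of $\mathfrak{a}$, however associated, is zero; it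 is split-solvable if there is a chain $\mathfrak{a}=\mathfrak{a}_0\supseteq\cdots\supseteq\mathfrak{a}_p=0$ of ideals of $\mathfrak{a}$ with $\dim(\mathfrak{a}_i/\mathfrak{a}_{i+1})=1$ for all $i$. *)

(* Purely algebraic (infinitesimal) model of a reductive
   homogeneous space G/H with an invariant metric. *)
From HB Require Import structures.
From mathcomp Require Import all_boot all_order all_algebra.
From mathcomp Require Import reals.
Set Implicit Arguments. Unset Strict Implicit. Unset Printing Implicit Defensive.
Import Order.TTheory GRing.Theory Num.Theory.
Local Open Scope ring_scope.

Section Defs.
Variables (R : realType) (V : vectType R).

Definition lie_bracket (br : V -> V -> V) : Prop :=
  [/\ forall (a : R) x y z, br (a *: x + y) z = a *: br x z + br y z,
      forall (a : R) x y z, br x (a *: y + z) = a *: br x y + br x z,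
      forall x, br x x = 0
    & forall x y z, br x (br y z) + br y (br z x) + br z (br x y) = 0].

Definition reductive_decomposition (br : V -> V -> V) (h m : {vspace V}) :=
  [/\ (h + m = fullv)%VS, (h :&: m = 0)%VS,
      (forall u v, u \in h -> v \in h -> br u v \in h)
    & (forall u x, u \in h -> x \in m -> br u x \in m)].

Definition mpart (h m : {vspace V}) (v : V) : V := daddv_pi m h v.

Definition brm (br : V -> V -> V) (h m : {vspace V}) (x y : V) : V :=
  mpart h m (br x y).

(* a real bilinear form (on g; only its restriction to m matters) *)
Definition bilinear_form (B : V -> V -> R) : Prop :=
  (forall (a : R) x y z, B (a *: x + y) z = a * B x z + B y z) /\
  (forall (a : R) x y z, B x (a *: y + z) = a * B x y + B x z).

Definition symmetric_on (m : {vspace V}) (B : V -> V -> R) : Prop :=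
  forall x y, x \in m -> y \in m -> B x y = B y x.

Definition ad_h_invariant (br : V -> V -> V) (h m : {vspace V})
  (B : V -> V -> R) : Prop :=
  forall u x y, u \in h -> x \in m -> y \in m ->
    B (br u x) y + B x (br u y) = 0.

Definition inner_product_on (m : {vspace V}) (ip : V -> V -> R) : Prop :=
  [/\ bilinear_form ip, symmetric_on m ip
    & forall x, x \in m -> x != 0 -> 0 < ip x x].

(* Lam X Y (X, Y in m) is the Levi-Civita connection of the invariant metric
   at the origin eH (Nomizu operator Lambda(X)Y = 1/2 [X,Y]_m + U(X,Y)),
   characterised through the inner product. *)
Definition levi_civita (br : V -> V -> V) (h m : {vspace V})
  (ip : V -> V -> R) (Lam : V -> V -> V) : Prop :=
  forall x y, x \in m -> y \in m ->
    Lam x y \in m /\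
    forall z, z \in m ->
      ip (Lam x y) z =
        2^-1 * ip (brm br h m x y) z
        + 2^-1 * (ip (brm br h m z x) y + ip x (brm br h m z y)).

(* (nabla_X A)(Y,Z) at the origin, for the G-invariant tensor field A *)
Definition nablaA (Lam : V -> V -> V) (A : V -> V -> R) (x y z : V) : R :=
  - A (Lam x y) z - A y (Lam x z).

Definition codazzi (m : {vspace V}) (Lam : V -> V -> V) (A : V -> V -> R) :=
  forall x y z, x \in m -> y \in m -> z \in m ->
    nablaA Lam A x y z = nablaA Lam A y x z.

Definition eigenspace_rel (m : {vspace V}) (ip A : V -> V -> R) (l : R)
  (x : V) : Prop :=
  x \in m /\ forall y, y \in m -> A x y = l * ip x y.

Definition alg_ideal (m : {vspace V}) (mul : V -> V -> V) (I : V -> Prop) :=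
  [/\ forall x, I x -> x \in m,
      I 0,
      forall (a : R) x y, I x -> I y -> I (a *: x + y)
    & forall x y, x \in m -> I y -> I (mul x y) /\ I (mul y x)].

Definition essential (m : {vspace V}) (mul : V -> V -> V)
  (ip : V -> V -> R) (Lam : V -> V -> V) (A : V -> V -> R) : Prop :=
  (exists x y z, [/\ x \in m, y \in m, z \in m & nablaA Lam A x y z != 0])
  /\ forall l : R, (exists x, eigenspace_rel m ip A l x /\ x != 0) ->
       ~ alg_ideal m mul (eigenspace_rel m ip A l).

Inductive is_product (m : {vspace V}) (mul : V -> V -> V) : nat -> V -> Prop :=
  | prod_one x : x \in m -> is_product m mul 1 x
  | prod_mul i j x y : is_product m mul i x -> is_product m mul j y ->
      is_product m mul (i + j) (mul x y).

Definition nilpotent_alg (m : {vspace V}) (mul : V -> V -> V) : Prop :=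
  exists t : nat, (0 < t)%N /\ forall x, is_product m mul t x -> x = 0.

Definition split_solvable_alg (m : {vspace V}) (mul : V -> V -> V) : Prop :=
  exists (p : nat) (a : nat -> {vspace V}),
    [/\ a 0%N = m, a p = 0%VS,
        forall i, (i < p)%N ->
          (a i.+1 <= a i)%VS /\ \dim (a i) = (\dim (a i.+1)).+1
      & forall i, (i <= p)%N -> alg_ideal m mul (fun x => x \in a i)].

End Defs.

From HB Require Import structures.
From mathcomp Require Import all_boot all_order all_algebra.
From mathcomp Require Import reals.
From mathcomp Require Import complex.
From mathcomp Require Import zify ring lra.
Import Order.TTheory GRing.Theory Num.Theory.
Local Open Scope ring_scope.

(* Let (e_i) be an orthonormal eigenbasis of A on m, with eigenvalues mu_i,
   and c_ijk = <[e_i, e_j]_m, e_k>.  By the Levi-Civita formula,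
   2 (nabla_{e_i} A)(e_j, e_k) = (mu_j - mu_k) (c_ijk - c_ikj + c_kji), and the
   Codazzi equation makes this expression totally symmetric in i, j, k.  Hence
   c_abd c_adb <= 0 whenever mu_b and mu_d differ from mu_a, and nabla A = 0 as
   soon as all these products vanish.

   Their sum over b and d is the trace of Q^2, where Q is ad_m(e_a) compressed
   to the orthogonal complement U of the mu_a-eigenspace.  If (m, [,]_m) is
   nilpotent or split-solvable, ad_m(e_a) preserves a flag of m whose steps
   have dimension one or are mapped into the next term.  Projected to U, it
   yields an orthonormal basis of U in which Q is block triangular with 1x1 or
   zero diagonal blocks, so the trace of Q^2 is a sum of squares.  Thus all the
   products vanish, nabla A = 0, and A is not essential. *)

Set Implicit Arguments. Unset Strict Implicit. Unset Printing Implicit Defensive.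

Section ScalarFunction.
Variables (R : pzRingType) (V : lmodType R) (f : V -> R) (fZ : scalar f).

Let F : {scalar V} := HB.pack f (GRing.isLinear.Build R V R *%R f fZ).

Lemma scalar_fun0 : f 0 = 0. Proof. exact: (linear0 F). Qed.
Lemma scalar_funD x y : f (x + y) = f x + f y. Proof. exact: (linearD F). Qed.
Lemma scalar_funB x y : f (x - y) = f x - f y. Proof. exact: (linearB F). Qed.
Lemma scalar_funZ a x : f (a *: x) = a * f x. Proof. exact: (scalarZ F). Qed.
Lemma scalar_fun_sum I r (P : pred I) (E : I -> V) :
  f (\sum_(i <- r | P i) E i) = \sum_(i <- r | P i) f (E i).
Proof. exact: (linear_sum F). Qed.

End ScalarFunction.

Section LinearEndomorphism.
Variables (R : fieldType) (V : vectType R).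

Definition lfun_of (f : V -> V) (fZ : linear f) : 'End(V) :=
  linfun (HB.pack f (GRing.isLinear.Build R V V *:%R f fZ) : {linear V -> V}).

Lemma lfun_ofE f (fZ : linear f) : lfun_of fZ =1 f.
Proof. exact: lfunE. Qed.

Lemma stable_memv (Q : 'End(V)) W x : (Q @: W <= W)%VS -> x \in W -> Q x \in W.
Proof. by move=> QW xW; apply: (subvP QW); apply: memv_img. Qed.

Lemma dim_addv_line (W : {vspace V}) x : x \notin W -> \dim (W + <[x]>) = (\dim W).+1.
Proof.
move=> xW; have x0 : x != 0 by apply: contraNneq xW => ->; rewrite mem0v.
suff WxI : (W :&: <[x]> = 0)%VS by rewrite dimv_disjoint_sum // dim_vline x0 addn1.
apply/eqP; rewrite -subv0; apply/subvP => v /memv_capP [vW /vlineP [k vk]].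
rewrite memv0 vk; have [->|k0] := eqVneq k 0; first by rewrite scale0r.
by move: vW; rewrite vk => /(memvZ k^-1); rewrite scalerA mulVf // scale1r (negPf xW).
Qed.

Lemma subv_between_dim (Z Y W : {vspace V}) :
  (Z <= Y <= W)%VS -> (\dim W <= (\dim Z).+1)%N -> Y = Z \/ Y = W.
Proof.
case/andP => ZY YW dW; have [dY|dY] := leqP (\dim Y) (\dim Z).
  by left; apply/esym/eqP; rewrite eqEdim ZY.
by right; apply/eqP; rewrite eqEdim YW (leq_trans dW).
Qed.

Lemma dim_limg_step (f : 'End(V)) (Z W : {vspace V}) : (Z <= W)%VS ->
  (\dim W <= (\dim Z).+1)%N -> (\dim (f @: W) <= (\dim (f @: Z)).+1)%N.
Proof.
move=> ZW dW; have [WZ|/subvPn [x xW xZ]] := boolP (W <= Z)%VS.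
  by rewrite leqW // dimvS // limgS.
have /eqP -> : W == (Z + <[x]>)%VS.
  by rewrite eq_sym eqEdim subv_add ZW -memvE xW dim_addv_line.
rewrite limgD limg_line -addn1; apply: leq_trans (dimv_add_leqif _ _).1 _.
by rewrite leq_add2l dim_vline leq_b1.
Qed.

End LinearEndomorphism.

(* The complexified matrix is Hermitian, so its spectral decomposition has a
   real eigenvalue, which is then a root of the characteristic polynomial of M. *)
Lemma symmetric_mx_eigenvector (R : rcfType) k (M : 'M[R]_k.+1) : M^T = M ->
  exists mu, exists2 v : 'rV_k.+1, v *m M = mu *: v & v != 0.
Proof.
move=> Msym; pose Mc := map_mx (@real_complex R) M.
have Mc_herm : Mc \is hermsymmx.
  apply: realsym_hermsym.
    apply/is_hermitianmxP; rewrite expr0 scale1r.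
    by apply/matrixP => i j; rewrite !mxE -[in LHS]Msym mxE.
  by apply/mxOverP => i j; rewrite mxE; apply/complex_realP; exists (M i j).
have /orthomx_spectralP Mc_diag := hermitian_normalmx Mc_herm.
set P := spectralmx Mc in Mc_diag; set d := spectral_diag Mc in Mc_diag.
have Pu : P \in unitmx by apply: spectral_unit.
have PMc : P *m Mc = diag_mx d *m P by rewrite {1}Mc_diag !mulmxA mulmxV // mul1mx.
have d0_eig : eigenvalue Mc (d 0 0).
  apply/eigenvalueP; exists (row 0 P).
    rewrite -row_mul PMc; apply/rowP => j; rewrite !mxE (bigD1 0) //= big1 ?addr0.
      by rewrite mxE eqxx mulr1n.
    by move=> i /negPf i0; rewrite mxE eq_sym i0 mulr0n mul0r.
  apply/eqP => P0; have : row 0 (P *m invmx P) = 0 by rewrite row_mul P0 mul0mx.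
  by rewrite mulmxV // => /rowP /(_ 0); rewrite !mxE eqxx => /eqP; rewrite oner_eq0.
have /complex_realP [a da] : d 0 0 \is Num.real.
  exact: mxOverP (hermitian_spectral_diag_real Mc_herm) 0 0.
exists a; apply/eigenvalueP.
move: d0_eig; rewrite eigenvalue_root_char da -map_char_poly fmorph_root.
by rewrite -eigenvalue_root_char.
Qed.

Section InnerProduct.
Variables (R : realType) (V : vectType R) (m : {vspace V}) (ip : V -> V -> R).
Hypothesis ip_inner : inner_product_on m ip.

Let ip_scalarl z : scalar (ip^~ z).
Proof. by case: ip_inner => -[ipl _] _ _ a x y; rewrite /= ipl. Qed.

Let ip_scalarr z : scalar (ip z).
Proof. by case: ip_inner => -[_ ipr] _ _ a x y; rewrite ipr. Qed.

Lemma ipDl x y z : ip (x + y) z = ip x z + ip y z.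
Proof. exact: (scalar_funD (ip_scalarl z)). Qed.
Lemma ipDr x y z : ip z (x + y) = ip z x + ip z y.
Proof. exact: (scalar_funD (ip_scalarr z)). Qed.
Lemma ipBl x y z : ip (x - y) z = ip x z - ip y z.
Proof. exact: (scalar_funB (ip_scalarl z)). Qed.
Lemma ip0l z : ip 0 z = 0.
Proof. exact: (scalar_fun0 (ip_scalarl z)). Qed.
Lemma ipNl x z : ip (- x) z = - ip x z.
Proof. by rewrite -sub0r ipBl ip0l sub0r. Qed.
Lemma ipZl a x z : ip (a *: x) z = a * ip x z.
Proof. exact: (scalar_funZ (ip_scalarl z)). Qed.
Lemma ipZr a x z : ip z (a *: x) = a * ip z x.
Proof. exact: (scalar_funZ (ip_scalarr z)). Qed.
Lemma ip_suml z I r (P : pred I) (E : I -> V) :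
  ip (\sum_(i <- r | P i) E i) z = \sum_(i <- r | P i) ip (E i) z.
Proof. exact: (scalar_fun_sum (ip_scalarl z)). Qed.
Lemma ip_sumr z I r (P : pred I) (E : I -> V) :
  ip z (\sum_(i <- r | P i) E i) = \sum_(i <- r | P i) ip z (E i).
Proof. exact: (scalar_fun_sum (ip_scalarr z)). Qed.

Lemma ip_sym x y : x \in m -> y \in m -> ip x y = ip y x.
Proof. by case: ip_inner => _ ips _; apply: ips. Qed.

Lemma ip_gt0 x : x \in m -> x != 0 -> 0 < ip x x.
Proof. by case: ip_inner => _ _; apply. Qed.

Lemma ip_injl u v : u \in m -> v \in m -> {in m, forall z, ip u z = ip v z} -> u = v.
Proof.
move=> um vm uv; apply/eqP; rewrite -subr_eq0; apply/negPn/negP => uv0.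
have uvm : u - v \in m by rewrite memvB.
by have := ip_gt0 uvm uv0; rewrite {1}ipBl uv // subrr ltxx.
Qed.

Lemma ip_normalize x : x \in m -> x != 0 ->
  ip ((Num.sqrt (ip x x))^-1 *: x) ((Num.sqrt (ip x x))^-1 *: x) = 1.
Proof.
move=> xm x0; have xx := ip_gt0 xm x0.
by rewrite ipZl ipZr mulrA -expr2 exprVn sqr_sqrtr ?mulVf ?gt_eqF ?ltW.
Qed.

Definition frame_expand (s : seq V) (y : V) := \sum_(x <- s) ip y x *: x.

Definition parseval_frame (W : {vspace V}) (s : seq V) :=
  {subset s <= W} /\ {in W, forall y, frame_expand s y = y}.

Definition frame_trace (N : 'End(V)) (s : seq V) := \sum_(x <- s) ip (N x) x.

Definition frame_trace_sqr (Q : 'End(V)) (s : seq V) :=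
  \sum_(x <- s) \sum_(y <- s) ip (Q x) y * ip (Q y) x.

Lemma frame_expand_linear s : linear (frame_expand s).
Proof.
move=> a x y; rewrite /frame_expand scaler_sumr -big_split; apply: eq_bigr => z _.
by rewrite ipDl ipZl scalerDl scalerA.
Qed.

Lemma frame_expand_mem (W : {vspace V}) s y : {subset s <= W} -> frame_expand s y \in W.
Proof.
by move=> sW; rewrite /frame_expand big_seq memv_suml // => x /sW xW; rewrite memvZ.
Qed.

Lemma frame_trace_sqrE (W : {vspace V}) s Q : parseval_frame W s -> (Q @: W <= W)%VS ->
  frame_trace_sqr Q s = frame_trace (Q \o Q)%VF s.
Proof.
move=> [sW sE] QW; rewrite /frame_trace_sqr /frame_trace big_seq [RHS]big_seq.
apply: eq_bigr => x xs; have QxW := stable_memv QW (sW _ xs).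
rewrite comp_lfunE -{2}(sE _ QxW) /frame_expand linear_sum ip_suml.
by apply: eq_bigr => y _; rewrite linearZ ipZl.
Qed.

Lemma frame_trace_eq (W : {vspace V}) s t N : (W <= m)%VS ->
  parseval_frame W s -> parseval_frame W t -> frame_trace N s = frame_trace N t.
Proof.
move=> Wm [sW sE] [tW tE].
have sm x : x \in s -> x \in m by move/sW/(subvP Wm).
have tm z : z \in t -> z \in m by move/tW/(subvP Wm).
rewrite /frame_trace; transitivity (\sum_(x <- s) \sum_(z <- t) ip x z * ip (N x) z).
  rewrite big_seq [RHS]big_seq; apply: eq_bigr => x xs.
  by rewrite -{2}(tE _ (sW _ xs)) ip_sumr; apply: eq_bigr => z _; rewrite ipZr.
rewrite exchange_big big_seq [RHS]big_seq; apply: eq_bigr => z zt.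
have -> : N z = N (frame_expand s z) by rewrite sE ?tW.
rewrite linear_sum ip_suml big_seq [RHS]big_seq.
by apply: eq_bigr => x xs; rewrite linearZ ipZl (ip_sym (tm _ zt) (sm _ xs)).
Qed.

Lemma frame_trace_sqr_eq (W : {vspace V}) s t Q : (W <= m)%VS -> (Q @: W <= W)%VS ->
  parseval_frame W s -> parseval_frame W t -> frame_trace_sqr Q s = frame_trace_sqr Q t.
Proof.
move=> Wm QW fs ft.
by rewrite (frame_trace_sqrE fs QW) (frame_trace_sqrE ft QW) (frame_trace_eq _ Wm fs ft).
Qed.

Lemma frame_trace_sqr_cons (W : {vspace V}) s Q g : {subset s <= W} -> (Q @: W <= W)%VS ->
  {in W, forall w, ip w g = 0} ->
  frame_trace_sqr Q (g :: s) = frame_trace_sqr Q s + ip (Q g) g ^+ 2.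
Proof.
move=> sW QW gW; have Qs x : x \in s -> ip (Q x) g = 0 by move/sW/(stable_memv QW)/gW.
have row_g : \sum_(y <- g :: s) ip (Q g) y * ip (Q y) g = ip (Q g) g ^+ 2.
  by rewrite big_cons big_seq big1 ?addr0 // => y ys; rewrite Qs ?mulr0.
have rows_s : \sum_(x <- s) \sum_(y <- g :: s) ip (Q x) y * ip (Q y) x
            = frame_trace_sqr Q s.
  by rewrite big_seq [RHS]big_seq; apply: eq_bigr => x xs; rewrite big_cons Qs ?mul0r ?add0r.
by rewrite /frame_trace_sqr big_cons row_g rows_s addrC.
Qed.

Definition gram_schmidt_next (s : seq V) (x0 : V) :=
  let r := x0 - frame_expand s x0 in (Num.sqrt (ip r r))^-1 *: r.

Section GramSchmidtStep.
Variables (W : {vspace V}) (s : seq V) (x0 : V).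
Hypotheses (Wm : (W <= m)%VS) (fs : parseval_frame W s) (x0m : x0 \in m) (x0W : x0 \notin W).

Let r := x0 - frame_expand s x0.

Let r_orth w : w \in W -> ip w r = 0.
Proof.
move=> wW; have wm := subvP Wm _ wW; case: fs => sW sE.
have em : frame_expand s x0 \in m by rewrite (subvP Wm) ?frame_expand_mem.
rewrite /r ip_sym ?memvB // ipBl -{1}(sE _ wW) /frame_expand ip_sumr ip_suml -sumrB.
rewrite big_seq big1 // => x xs; have xm : x \in m by rewrite (subvP Wm) ?sW.
by rewrite ipZl ipZr (ip_sym wm xm) mulrC subrr.
Qed.

Lemma gram_schmidt_next_orthogonal w : w \in W -> ip w (gram_schmidt_next s x0) = 0.
Proof. by move=> wW; rewrite /gram_schmidt_next /= -/r ipZr (r_orth wW) mulr0. Qed.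

Lemma gram_schmidt_next_frame : parseval_frame (W + <[x0]>) (gram_schmidt_next s x0 :: s).
Proof.
case: fs => sW sE; set e := frame_expand s x0; set g := gram_schmidt_next s x0.
have eW : e \in W by apply: frame_expand_mem.
have rm : r \in m by rewrite memvB // (subvP Wm).
have r0 : r != 0 by apply: contra x0W; rewrite subr_eq0 => /eqP ->.
have rr_gt0 : 0 < ip r r by apply: ip_gt0.
have c0 : Num.sqrt (ip r r) != 0 by rewrite gt_eqF // sqrtr_gt0.
have x0g : ip x0 g *: g = r.
  have -> : ip x0 g = Num.sqrt (ip r r).
    rewrite -(subrK e x0) ipDl (gram_schmidt_next_orthogonal eW) addr0 ip_sym ?memvZ //.
    by rewrite ipZl -{2}(sqr_sqrtr (ltW rr_gt0)) expr2 mulKf.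
  by rewrite /g /gram_schmidt_next /= -/r scalerA mulfV // scale1r.
split.
  have WWx : (W <= W + <[x0]>)%VS by apply: addvSl.
  move=> x; rewrite inE => /predU1P [->|/sW xW]; last exact: (subvP WWx).
  rewrite /g /gram_schmidt_next /= memvZ // memvB ?(subvP WWx _ eW) //.
  by have := memv_add (mem0v W) (memv_line x0); rewrite add0r.
move=> _ /memv_addP [w wW [_ /vlineP [k ->] ->]].
rewrite /frame_expand big_cons -/(frame_expand s _) ipDl ipZl.
rewrite (gram_schmidt_next_orthogonal wW) add0r.
have -> : frame_expand s (w + k *: x0) = w + k *: e.
  by rewrite addrC frame_expand_linear (sE _ wW) addrC.
by rewrite -scalerA x0g /r scalerBr addrCA subrK.
Qed.

End GramSchmidtStep.

(* Every space between Z and W is Q-stable, so each Gram-Schmidt vector g only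
   adds the square <Q g, g>^2 to the trace of Q^2. *)
Lemma frame_extend (W Z : {vspace V}) (Q : 'End(V)) s :
  (W <= m)%VS -> (Z <= W)%VS -> (forall Y, (Z <= Y <= W)%VS -> (Q @: Y <= Y)%VS) ->
  parseval_frame Z s -> 0 <= frame_trace_sqr Q s ->
  exists2 t, parseval_frame W t & 0 <= frame_trace_sqr Q t.
Proof.
move=> Wm; have [k] := ubnP (\dim W - \dim Z).
elim: k Z s => // k IH Z s dk ZW QY fs qs.
have [WZ|/subvPn [x0 x0W x0Z]] := boolP (W <= Z)%VS.
  have /eqP <- : Z == W by rewrite eqEsubv ZW WZ.
  by exists s.
have Zm := subv_trans ZW Wm; have x0m := subvP Wm _ x0W.
have Z'W : (Z + <[x0]> <= W)%VS by rewrite subv_add ZW -memvE.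
have ZZ' : (Z <= Z + <[x0]>)%VS by apply: addvSl.
have dZ' := dim_addv_line x0Z; have := dimvS Z'W; rewrite dZ' => dZW.
apply: (IH _ (gram_schmidt_next s x0 :: s) _ Z'W).
- by rewrite dZ'; lia.
- by move=> Y /andP [Z'Y YW]; rewrite QY // (subv_trans ZZ' Z'Y).
- exact: gram_schmidt_next_frame.
rewrite (frame_trace_sqr_cons (proj1 fs)) ?QY ?subvv ?ZW ?addr_ge0 ?sqr_ge0 //.
exact: gram_schmidt_next_orthogonal.
Qed.

Lemma flag_frame_trace_sqr_ge0 (W : nat -> {vspace V}) p Q s :
  W p = 0%VS -> (forall i, (i <= p)%N -> (W i <= m)%VS) ->
  (forall i, (i < p)%N -> (W i.+1 <= W i)%VS) ->
  (forall i Y, (i < p)%N -> (W i.+1 <= Y <= W i)%VS -> (Q @: Y <= Y)%VS) ->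
  parseval_frame (W 0%N) s -> 0 <= frame_trace_sqr Q s.
Proof.
move=> Wp Wm WS QY fs.
have frames j : (j <= p)%N ->
    exists2 t, parseval_frame (W (p - j)%N) t & 0 <= frame_trace_sqr Q t.
  elim: j => [_|j IH jp].
    exists [::]; last by rewrite /frame_trace_sqr big_nil.
    rewrite subn0 Wp; split=> // y; rewrite memv0 => /eqP ->.
    by rewrite /frame_expand big_nil.
  have [t] := IH (ltnW jp); have -> : (p - j = (p - j.+1).+1)%N by lia.
  apply: frame_extend; rewrite ?Wm ?WS ?leq_subr //; first lia.
  by move=> Y; apply: QY; lia.
have [t ft qt] := frames p (leqnn p); rewrite subnn in ft.
have QW0 : (Q @: W 0%N <= W 0%N)%VS.
  have [p0|p_gt0] := posnP p; first by rewrite -p0 Wp limg0 subvv.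
  by apply: (QY 0%N) => //; rewrite subvv andbT WS.
by rewrite (frame_trace_sqr_eq (Wm _ (leq0n _)) QW0 fs ft).
Qed.

Definition orthonormal (s : seq V) :=
  forall i j, (i < size s)%N -> (j < size s)%N -> ip s`_i s`_j = (i == j)%:R.

Definition eigenframe (B : V -> V -> R) (W : {vspace V}) (s : seq (V * R)) :=
  [/\ forall p, p \in s -> {in W, forall y, B p.1 y = p.2 * ip p.1 y},
      orthonormal (map fst s) & parseval_frame W (map fst s)].

Definition has_unit_eigenvector (B : V -> V -> R) (W : {vspace V}) :=
  exists2 x, x \in W & ip x x = 1 /\ exists mu, {in W, forall y, B x y = mu * ip x y}.

Lemma unit_vector_complement (W : {vspace V}) x : (W <= m)%VS -> x \in W -> ip x x = 1 ->
  exists2 W' : {vspace V}, (W' <= W)%VS /\ (\dim W' < \dim W)%N &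
    {in W', forall w, ip w x = 0} /\ {in W, forall y, y - ip y x *: x \in W'}.
Proof.
move=> Wm xW xx; have pi_lin : linear (fun y => y - ip y x *: x).
  by move=> a u v; rewrite ipDl ipZl scalerDl scalerBr -scalerA opprD addrACA.
pose pi := lfun_of pi_lin; have piE y : pi y = y - ip y x *: x by apply: lfun_ofE.
have W'x : {in (pi @: W)%VS, forall w, ip w x = 0}.
  by move=> _ /memv_imgP [u _ ->]; rewrite piE ipBl ipZl xx mulr1 subrr.
exists (pi @: W)%VS; last by split=> // y yW; rewrite -piE memv_img.
have W'W : (pi @: W <= W)%VS.
  by apply/subvP => _ /memv_imgP [u uW ->]; rewrite piE memvB ?memvZ.
split=> //; rewrite ltn_neqAle dimvS // andbT; apply: contraTneq isT => dWW'.
have /eqP W'eW : (pi @: W)%VS == W by rewrite eqEdim W'W dWW' leqnn.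
by have := W'x x; rewrite W'eW xx => /(_ xW) /eqP; rewrite oner_eq0.
Qed.

Lemma eigenframe_exists_of (B : V -> V -> R) : bilinear_form B -> symmetric_on m B ->
  (forall W, (W <= m)%VS -> (0 < \dim W)%N -> has_unit_eigenvector B W) ->
  forall W, (W <= m)%VS -> exists s, eigenframe B W s.
Proof.
move=> [Bl Br] Bsym B_eig W; have [n] := ubnP (\dim W).
elim: n W => // n IH W dW Wm; have [W0|W_gt0] := posnP (\dim W).
  exists [::]; split=> //; split=> // y; move/eqP: W0; rewrite dimv_eq0 => /eqP ->.
  by rewrite memv0 => /eqP ->; rewrite /frame_expand big_nil.
have [x xW [xx [mu x_eig]]] := B_eig W Wm W_gt0; have xm := subvP Wm _ xW.
have [W' [W'W dW'] [W'x piW]] := unit_vector_complement Wm xW xx.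
have W'm := subv_trans W'W Wm.
have xW' w : w \in W' -> ip x w = 0.
  by move=> wW'; rewrite ip_sym ?W'x //; apply: (subvP W'm).
have [s [s_eig s_on [s_W' s_exp]]] := IH W' (leq_trans dW' (dW : \dim W <= n)%N) W'm.
have yE y : y = ip y x *: x + (y - ip y x *: x) by rewrite addrC subrK.
have s_x p : p \in s -> ip x p.1 = 0 by move=> ps; rewrite xW' ?s_W' ?map_f.
exists ((x, mu) :: s); split.
- move=> p; rewrite inE => /predU1P [-> //|ps] y yW.
  have pW' : p.1 \in W' by rewrite s_W' ?map_f.
  have pm := subvP W'm _ pW'.
  rewrite [y]yE Br ipDr ipZr (s_eig _ ps _ (piW _ yW)) (Bsym _ _ pm xm).
  by rewrite x_eig ?(subvP W'W) // (s_x _ ps) (W'x _ pW') !mulr0 !add0r.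
- move=> [|i] [|j] /= i_lt j_lt; rewrite ?xx // ?W'x ?xW' ?s_on //;
    by rewrite s_W' // mem_nth.
split=> [y|y yW].
  by rewrite inE => /predU1P [-> //|/s_W' /(subvP W'W)].
have Sx : frame_expand (map fst s) x = 0.
  by rewrite /frame_expand big_map big_seq big1 // => p ps; rewrite s_x ?scale0r.
rewrite /frame_expand /= big_cons -/(frame_expand _ y) {2}[y]yE frame_expand_linear Sx.
by rewrite scaler0 add0r s_exp ?piW // addrC subrK.
Qed.

Lemma orthonormal_frame_exists W : (W <= m)%VS ->
  exists2 f, orthonormal f & parseval_frame W f.
Proof.
move=> Wm; have [ip_bil ip_symm _] := ip_inner.
suff [s [_ s_on s_fr]] : exists s, eigenframe ip W s by exists (map fst s).
apply: (eigenframe_exists_of ip_bil ip_symm _ Wm) => U Um U_gt0; have x0U := memv_pick U; set x0 := vpick U in x0U *.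
have x00 : x0 != 0 by rewrite vpick0 -dimv_eq0 -lt0n.
exists ((Num.sqrt (ip x0 x0))^-1 *: x0); first by rewrite memvZ.
by split; [rewrite ip_normalize ?(subvP Um) | exists 1 => y _; rewrite mul1r].
Qed.

Lemma ip_orthonormal_comb f n (c : 'I_n -> R) (j : 'I_n) : orthonormal f ->
  (n <= size f)%N -> ip (\sum_(i < n) c i *: f`_i) f`_j = c j.
Proof.
move=> f_on nf; have lt_f (i : 'I_n) : (i < size f)%N by apply: leq_trans nf.
rewrite ip_suml (bigD1 j) //= big1 ?addr0 => [|i ij]; rewrite ipZl f_on //.
  by rewrite eqxx mulr1.
by rewrite (inj_eq val_inj) (negPf ij) mulr0.
Qed.

Lemma unit_eigenvector_exists (B : V -> V -> R) : bilinear_form B -> symmetric_on m B ->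
  forall W, (W <= m)%VS -> (0 < \dim W)%N -> has_unit_eigenvector B W.
Proof.
move=> [Bl Br] Bsym W Wm W_gt0; have [f f_on [fW f_exp]] := orthonormal_frame_exists Wm.
have fm i : f`_i \in m.
  have [i_lt|i_ge] := ltnP i (size f); last by rewrite nth_default ?mem0v.
  by rewrite (subvP Wm) ?fW ?mem_nth.
have [k fk] : exists k, size f = k.+1.
  case: f f_exp {f_on fW fm} => [f_exp|x f _]; last by exists (size f).
  have := f_exp _ (memv_pick W); rewrite /frame_expand big_nil => /esym/eqP.
  by rewrite vpick0 -dimv_eq0 => /eqP d0; rewrite d0 in W_gt0.
have f_sum y : y \in W -> y = \sum_(j < k.+1) ip y f`_j *: f`_j.
  by move=> yW; rewrite -{1}(f_exp _ yW) /frame_expand (big_nth 0) fk big_mkord.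
pose M : 'M[R]_k.+1 := \matrix_(i, j) B f`_i f`_j.
have /symmetric_mx_eigenvector [mu [v vM v0]] : M^T = M.
  by apply/matrixP => i j; rewrite !mxE Bsym.
pose x := \sum_(i < k.+1) v 0 i *: f`_i.
have xf (j : 'I_k.+1) : ip x f`_j = v 0 j by rewrite ip_orthonormal_comb ?fk.
have Bl_sc z : scalar (B^~ z) by move=> a u w; rewrite /= Bl.
have Br_sc z : scalar (B z) by move=> a u w; rewrite Br.
have Bxf (j : 'I_k.+1) : B x f`_j = mu * v 0 j.
  rewrite (scalar_fun_sum (Bl_sc _)); have /rowP /(_ j) := vM; rewrite !mxE => <-.
  by apply: eq_bigr => i _; rewrite (scalar_funZ (Bl_sc _)) mxE.
have xW : x \in W by rewrite memv_suml // => i _; rewrite memvZ // fW // mem_nth ?fk.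
have x0 : x != 0.
  by apply: contraNneq v0 => x0; apply/eqP/rowP => j; rewrite mxE -xf x0 ip0l.
have x_eig : {in W, forall y, B x y = mu * ip x y}.
  move=> y yW; rewrite (f_sum _ yW) (scalar_fun_sum (Br_sc _)) ip_sumr mulr_sumr.
  by apply: eq_bigr => j _; rewrite (scalar_funZ (Br_sc _)) ipZr Bxf xf mulrCA.
exists ((Num.sqrt (ip x x))^-1 *: x); first by rewrite memvZ.
split; first by rewrite ip_normalize ?(subvP Wm).
by exists mu => y yW; rewrite (scalar_funZ (Bl_sc _)) ipZl x_eig // mulrCA.
Qed.

Lemma eigenbasis_exists (B : V -> V -> R) : bilinear_form B -> symmetric_on m B ->
  exists n (e : 'I_n -> V) (mu : 'I_n -> R),
    [/\ forall i, e i \in m, forall i, {in m, forall y, B (e i) y = mu i * ip (e i) y}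
      & {in m, forall y, \sum_i ip y (e i) *: e i = y}].
Proof.
move=> B_bil Bsym; have B_eig := unit_eigenvector_exists B_bil Bsym.
have [s [s_eig _ [s_m s_exp]]] := eigenframe_exists_of B_bil Bsym B_eig (subvv m).
exists (size s), (fun i : 'I_(size s) => (s`_i).1), (fun i : 'I_(size s) => (s`_i).2); split.
- by move=> i; rewrite s_m // map_f ?mem_nth.
- by move=> i; apply: s_eig; rewrite mem_nth.
by move=> y ym; rewrite -{2}(s_exp _ ym) /frame_expand big_map (big_nth 0) big_mkord.
Qed.

Definition linear_on (f : V -> R) :=
  forall a x y, x \in m -> y \in m -> f (a *: x + y) = a * f x + f y.

Lemma linear_on_eq0 (f : V -> R) n (e : 'I_n -> V) : linear_on f ->
  (forall i, e i \in m) -> {in m, forall y, \sum_i ip y (e i) *: e i = y} ->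
  (forall i, f (e i) = 0) -> {in m, forall y, f y = 0}.
Proof.
move=> fl em e_exp fe y ym; rewrite -(e_exp _ ym).
have f0 : f 0 = 0.
  by have := fl (-1) 0 0 (mem0v _) (mem0v _); rewrite scaler0 addr0 mulN1r addNr.
suff [] : \sum_i ip y (e i) *: e i \in m /\ f (\sum_i ip y (e i) *: e i) = 0 by [].
apply: (big_ind (fun z => z \in m /\ f z = 0)) => [|u v [um fu] [vm fv]|i _].
- by rewrite mem0v.
- by rewrite memvD // -[u]scale1r fl // fu fv mulr0 addr0.
- by rewrite memvZ // -[_ *: _]addr0 fl ?mem0v ?memvZ // fe f0 mulr0 addr0.
Qed.

End InnerProduct.

Section AdaptedFlag.
Variables (R : fieldType) (V : vectType R) (m : {vspace V}) (L : 'End(V)).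

Definition adapted_flag (N : nat -> {vspace V}) (p : nat) :=
  [/\ N 0%N = m, N p = 0%VS,
      forall i, (i <= p)%N -> (N i <= m)%VS /\ (L @: N i <= N i)%VS
    & forall i, (i < p)%N -> (N i.+1 <= N i)%VS /\
        ((\dim (N i) <= (\dim (N i.+1)).+1)%N \/ (L @: N i <= N i.+1)%VS)].

End AdaptedFlag.

Section BracketOnM.
Variables (R : realType) (V : vectType R) (br : V -> V -> V) (h m : {vspace V}).
Hypothesis br_lie : lie_bracket br.

Local Notation brm := (brm br h m).

Lemma brm_mem x y : brm x y \in m.
Proof. exact: memv_pi. Qed.

Lemma brm_linear x : linear (brm x).
Proof. by case: br_lie => _ brr _ _ a y z; rewrite /brm /mpart brr linearP. Qed.

Lemma brm_linearl y a x x' : brm (a *: x + x') y = a *: brm x y + brm x' y.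
Proof. by case: br_lie => brl _ _ _; rewrite /brm /mpart brl linearP. Qed.

Lemma brm_anti x y : brm y x = - brm x y.
Proof.
case: br_lie => brl brr brxx _; rewrite /brm /mpart -linearN; congr (daddv_pi m h _).
have brDl u v w : br (u + v) w = br u w + br v w by rewrite -[u]scale1r brl !scale1r.
have brDr u v w : br w (u + v) = br w u + br w v by rewrite -[u]scale1r brr !scale1r.
have := brxx (x + y); rewrite brDl !brDr !brxx add0r addr0 => /eqP.
by rewrite addr_eq0 => /eqP ->; rewrite opprK.
Qed.

Definition adm x : 'End(V) := lfun_of (brm_linear x).

Lemma admE x y : adm x y = brm x y.
Proof. exact: lfun_ofE. Qed.

Lemma nilpotent_adapted_flag x : x \in m -> nilpotent_alg m brm ->
  exists N p, adapted_flag m (adm x) N p.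
Proof.
move=> xm [t [t_gt0 t_nil]]; pose N j := iter j (lfun_img (adm x)) m.
have N_prod j y : y \in N j -> is_product m brm j.+1 y.
  elim: j y => [|j IH] y; first exact: prod_one.
  case/memv_imgP => z zN ->; rewrite admE -add1n.
  exact: prod_mul (prod_one _ xm) (IH _ zN).
have ad_m : (adm x @: m <= m)%VS.
  by apply/subvP => _ /memv_imgP [y _ ->]; rewrite admE brm_mem.
have N_S j : (N j.+1 <= N j)%VS by elim: j => [|j IH] //; apply: limgS.
have N_m j : (N j <= m)%VS by elim: j => [|j IH] //; apply: subv_trans (N_S j) IH.
exists N, t.-1; split=> // [|i _|i _].
- apply/eqP; rewrite -subv0; apply/subvP => y /N_prod; rewrite prednK // => /t_nil ->.
  exact: mem0v.
- exact: conj (N_m i) (N_S i).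
- by split; [apply: N_S | right].
Qed.

Lemma split_solvable_adapted_flag x : x \in m -> split_solvable_alg m brm ->
  exists N p, adapted_flag m (adm x) N p.
Proof.
move=> xm [p [a [a0 ap a_step a_ideal]]]; exists a, p; split=> // i i_p.
  have [a_m _ _ a_mul] := a_ideal i i_p; split; first by apply/subvP => y /a_m.
  by apply/subvP => _ /memv_imgP [y ya ->]; rewrite admE; case: (a_mul x y xm ya).
by have [a_S ->] := a_step i i_p; split; last by left.
Qed.

End BracketOnM.

Section LeviCivita.
Variables (R : realType) (V : vectType R) (br : V -> V -> V) (h m : {vspace V}).
Variables (ip A : V -> V -> R) (Lam : V -> V -> V).
Hypotheses (br_lie : lie_bracket br) (ip_inner : inner_product_on m ip)
  (A_bil : bilinear_form A) (Lam_lc : levi_civita br h m ip Lam).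

Local Notation brm := (brm br h m).
Local Notation ipDl := (ipDl ip_inner).
Local Notation ipDr := (ipDr ip_inner).
Local Notation ipZl := (ipZl ip_inner).
Local Notation ipZr := (ipZr ip_inner).
Local Notation brm_linear := (brm_linear h m br_lie).
Local Notation brm_linearl := (brm_linearl h m br_lie).

Lemma Lam_mem x y : x \in m -> y \in m -> Lam x y \in m.
Proof. by move=> xm ym; case: (Lam_lc xm ym). Qed.

Lemma Lam_ip x y z : x \in m -> y \in m -> z \in m ->
  ip (Lam x y) z = 2^-1 * ip (brm x y) z + 2^-1 * (ip (brm z x) y + ip x (brm z y)).
Proof. by move=> xm ym zm; case: (Lam_lc xm ym) => _ ->. Qed.

Lemma Lam_linearl a x x' y : x \in m -> x' \in m -> y \in m ->
  Lam (a *: x + x') y = a *: Lam x y + Lam x' y.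
Proof.
move=> xm x'm ym; have xx'm : a *: x + x' \in m by rewrite memvD ?memvZ.
apply: (ip_injl ip_inner); rewrite ?memvD ?memvZ ?Lam_mem // => z zm.
rewrite ipDl ipZl !Lam_ip // brm_linearl brm_linear ?ipDl ?ipZl ?ipDr ?ipZr.
ring.
Qed.

Lemma Lam_linearr a x y y' : x \in m -> y \in m -> y' \in m ->
  Lam x (a *: y + y') = a *: Lam x y + Lam x y'.
Proof.
move=> xm ym y'm; have yy'm : a *: y + y' \in m by rewrite memvD ?memvZ.
apply: (ip_injl ip_inner); rewrite ?memvD ?memvZ ?Lam_mem // => z zm.
rewrite ipDl ipZl !Lam_ip // !brm_linear ?ipDl ?ipZl ?ipDr ?ipZr.
ring.
Qed.

Let A_scalarl z : scalar (A^~ z). Proof. by case: A_bil => Al _ a x y; rewrite /= Al. Qed.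
Let A_scalarr z : scalar (A z). Proof. by case: A_bil => _ Ar a x y; rewrite Ar. Qed.

Lemma nablaA_eq0 n (e : 'I_n -> V) : (forall i, e i \in m) ->
  {in m, forall y, \sum_i ip y (e i) *: e i = y} ->
  (forall i j k, nablaA Lam A (e i) (e j) (e k) = 0) ->
  forall x y z, x \in m -> y \in m -> z \in m -> nablaA Lam A x y z = 0.
Proof.
move=> em e_exp e_nabla x y z xm ym zm.
have AD := scalar_funD (A_scalarl _); have AZ := scalar_funZ (A_scalarl _).
have AD' := scalar_funD (A_scalarr _); have AZ' := scalar_funZ (A_scalarr _).
have lin_eq0 (f : V -> R) u : linear_on m f -> (forall i, f (e i) = 0) -> u \in m -> f u = 0.
  by move=> fl fe um; apply: (linear_on_eq0 fl em e_exp fe um).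
apply: (lin_eq0 (fun u => nablaA Lam A u y z)) => // [a u v um vm|i].
  by rewrite /nablaA !Lam_linearl // ?AD ?AZ ?AD' ?AZ'; ring.
apply: (lin_eq0 (fun u => nablaA Lam A (e i) u z)) => // [a u v um vm|j].
  by rewrite /nablaA Lam_linearr // ?AD ?AZ ?AD' ?AZ'; ring.
apply: (lin_eq0 (nablaA Lam A (e i) (e j))) => // a u v um vm.
by rewrite /nablaA Lam_linearr // ?AD ?AZ ?AD' ?AZ'; ring.
Qed.

End LeviCivita.

Lemma cyclic_sqr_identity (F : fieldType) (x y z a b c : F) :
  a + b + c = 0 -> b != 0 -> c != 0 ->
  b * (y + x - z) = a * (x + z - y) -> c * (z + y - x) = a * (x + z - y) ->
  4 * x * z * a ^+ 2 = (a * (x + z - y)) ^+ 2.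
Proof.
move=> abc b0 c0 eb ec; apply: (mulfI (mulf_neq0 b0 c0)).
have ebx : b * (2 * x) = (a + b) * (x + z - y).
  by rewrite [RHS]mulrDl -eb; ring.
have ecz : c * (2 * z) = (a + c) * (x + z - y).
  by rewrite [RHS]mulrDl -ec; ring.
have -> : b * c * (4 * x * z * a ^+ 2) = a ^+ 2 * (b * (2 * x)) * (c * (2 * z)) by ring.
have ab : a + b = - c by apply/eqP; rewrite -subr_eq0 opprK abc.
have ac : a + c = - b by apply/eqP; rewrite -subr_eq0 opprK addrAC abc.
by rewrite ebx ecz ab ac; ring.
Qed.

Lemma nonpos_sum_ge0_eq0 (R : numDomainType) (I : finType) (P : pred I) (F : I -> R) :
  (forall i, P i -> F i <= 0) -> 0 <= \sum_(i | P i) F i -> forall i, P i -> F i = 0.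
Proof.
move=> F_le0 S_ge0 i Pi; apply/eqP; rewrite -oppr_eq0; apply/eqP.
apply: (@psumr_eq0P _ _ P (fun i => - F i)) => // [j Pj|]; first by rewrite oppr_ge0 F_le0.
by rewrite sumrN; apply/eqP; rewrite oppr_eq0 eq_le S_ge0 sumr_le0.
Qed.

Section EigenCoordinates.
Variables (R : realType) (V : vectType R) (br : V -> V -> V) (h m : {vspace V}).
Variables (ip A : V -> V -> R) (Lam : V -> V -> V).
Hypotheses (br_lie : lie_bracket br) (ip_inner : inner_product_on m ip)
  (A_sym : symmetric_on m A) (Lam_lc : levi_civita br h m ip Lam)
  (A_codazzi : codazzi m Lam A).
Variables (n : nat) (e : 'I_n -> V) (mu : 'I_n -> R).
Hypotheses (e_m : forall i, e i \in m)
  (e_eig : forall i, {in m, forall y, A (e i) y = mu i * ip (e i) y}).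

Local Notation brm := (brm br h m).
Local Notation brm_anti := (brm_anti h m br_lie).
Local Notation ip_sym := (ip_sym ip_inner).
Local Notation ipNl := (ipNl ip_inner).
Local Notation Lam_ip := (Lam_ip Lam_lc).
Local Notation Lam_mem := (Lam_mem Lam_lc).

Definition sc i j k := ip (brm (e i) (e j)) (e k).

Definition lc i j k := sc i j k - sc i k j + sc k j i.

Definition nabla_coef i j k := (mu j - mu k) * lc i j k.

Lemma sc_anti i j k : sc j i k = - sc i j k.
Proof. by rewrite /sc brm_anti ipNl. Qed.

Lemma lc_anti i j k : lc i k j = - lc i j k.
Proof. by rewrite /lc (sc_anti k j i); ring. Qed.

Lemma lc_cyclic i j k : lc i j k = sc i j k + sc k i j - sc j k i.
Proof. by rewrite /lc (sc_anti k i j) (sc_anti j k i); ring. Qed.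

Lemma Lam_coefE i j k : 2 * ip (Lam (e i) (e j)) (e k) = lc i j k.
Proof.
rewrite Lam_ip // (ip_sym (e_m i) (brm_mem _ _ _ _ _)) /lc (sc_anti k i j) /sc opprK.
by rewrite mulrDr !mulrA divff ?pnatr_eq0 // !mul1r addrA.
Qed.

Lemma nablaA_coefE i j k : 2 * nablaA Lam A (e i) (e j) (e k) = nabla_coef i j k.
Proof.
have ij_m := Lam_mem (e_m i) (e_m j); have ik_m := Lam_mem (e_m i) (e_m k).
rewrite /nablaA (A_sym ij_m (e_m k)) !e_eig // (ip_sym (e_m k) ij_m) (ip_sym (e_m j) ik_m).
have -> : 2 * (- (mu k * ip (Lam (e i) (e j)) (e k)) - mu j * ip (Lam (e i) (e k)) (e j))
  = - mu k * (2 * ip (Lam (e i) (e j)) (e k)) - mu j * (2 * ip (Lam (e i) (e k)) (e j)).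
  by ring.
by rewrite !Lam_coefE (lc_anti i j k) /nabla_coef; ring.
Qed.

Lemma nabla_coef_swap i j k : nabla_coef i k j = nabla_coef i j k.
Proof. by rewrite /nabla_coef lc_anti; ring. Qed.

Lemma nabla_coef_codazzi i j k : nabla_coef j i k = nabla_coef i j k.
Proof. by rewrite -!nablaA_coefE A_codazzi. Qed.

Lemma nabla_coef_cyclic i j k : nabla_coef j k i = nabla_coef i j k.
Proof. by rewrite nabla_coef_swap nabla_coef_codazzi. Qed.

Lemma eigen_orthogonal i j : mu i != mu j -> ip (e i) (e j) = 0.
Proof.
move=> mu_ij; have := A_sym (e_m i) (e_m j); rewrite !e_eig // (ip_sym (e_m j) (e_m i)).
by move/eqP; rewrite -subr_eq0 -mulrBl mulf_eq0 subr_eq0 (negPf mu_ij) => /eqP.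
Qed.

Let lc_eigen_eq0 i j k : mu i = mu j -> mu j != mu k -> lc i j k = 0 /\ lc j k i = 0.
Proof.
move=> mu_ij mu_jk; have mu_ik : mu i != mu k by rewrite mu_ij.
have tau0 : nabla_coef k i j = 0 by rewrite /nabla_coef mu_ij subrr mul0r.
split.
  have := nabla_coef_cyclic k i j; rewrite tau0 /nabla_coef => /eqP.
  by rewrite mulf_eq0 subr_eq0 (negPf mu_jk) => /eqP.
have := nabla_coef_cyclic i j k; rewrite (nabla_coef_cyclic k i j) tau0 /nabla_coef => /eqP.
by rewrite mulf_eq0 subr_eq0 eq_sym (negPf mu_ik) => /eqP.
Qed.

Lemma sc_eigen_eq0 i j k : mu i = mu j -> mu j != mu k -> sc i j k = 0.
Proof.
by move=> mu_ij mu_jk; have [] := lc_eigen_eq0 mu_ij mu_jk; rewrite !lc_cyclic; lra.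
Qed.

Lemma sc_eigen_anti i j k : mu i = mu j -> mu j != mu k -> sc k j i = - sc k i j.
Proof.
move=> mu_ij mu_jk; have [] := lc_eigen_eq0 mu_ij mu_jk; rewrite !lc_cyclic.
by have := sc_anti k j i; lra.
Qed.

Lemma sc_prod_distinct i j k : mu i != mu j -> mu j != mu k -> mu i != mu k ->
  4 * (sc i j k * sc i k j) * (mu j - mu k) ^+ 2 = - nabla_coef i j k ^+ 2.
Proof.
move=> mu_ij mu_jk mu_ik.
have tau_jki := nabla_coef_cyclic i j k; have tau_kij := esym (nabla_coef_cyclic k i j).
rewrite /nabla_coef !lc_cyclic in tau_jki tau_kij.
have mu_sum : (mu j - mu k) + (mu k - mu i) + (mu i - mu j) = 0 by ring.
have mu_ki : mu k - mu i != 0 by rewrite subr_eq0 eq_sym.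
have mu_ij' : mu i - mu j != 0 by rewrite subr_eq0.
have := cyclic_sqr_identity mu_sum mu_ki mu_ij' tau_jki tau_kij.
by rewrite (sc_anti k i j) /nabla_coef lc_cyclic => <-; ring.
Qed.

Lemma sc_prod_le0 i b d : mu b != mu i -> mu d != mu i -> sc i b d * sc i d b <= 0.
Proof.
move=> mu_bi mu_di; have [mu_bd|mu_bd] := eqVneq (mu b) (mu d).
  by rewrite (sc_eigen_anti mu_bd mu_di) mulrN oppr_le0 -expr2 sqr_ge0.
have sq_gt0 : 0 < 4 * (mu b - mu d) ^+ 2.
  by rewrite mulr_gt0 ?ltr0n // exprn_even_gt0 //= subr_eq0.
rewrite -(pmulr_rle0 _ sq_gt0) mulrAC.
rewrite sc_prod_distinct ?oppr_le0 ?sqr_ge0 // eq_sym //.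
Qed.

Definition compressed_trace_sqr a :=
  \sum_(b | mu b != mu a) \sum_(d | mu d != mu a) sc a b d * sc a d b.

Lemma nablaA_basis_eq0 : (forall a, 0 <= compressed_trace_sqr a) ->
  forall i j k, nablaA Lam A (e i) (e j) (e k) = 0.
Proof.
move=> tr_ge0 i j k; suff tau0 : nabla_coef i j k = 0.
  by have := nablaA_coefE i j k; rewrite tau0 => /eqP; rewrite mulf_eq0 pnatr_eq0 => /eqP.
have [mu_ij|mu_ij] := eqVneq (mu i) (mu j).
  by rewrite (nabla_coef_cyclic k i j) /nabla_coef mu_ij subrr mul0r.
have [mu_jk|mu_jk] := eqVneq (mu j) (mu k); first by rewrite /nabla_coef mu_jk subrr mul0r.
have [mu_ik|mu_ik] := eqVneq (mu i) (mu k).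
  by rewrite -nabla_coef_codazzi /nabla_coef mu_ik subrr mul0r.
have sc0 : sc i j k * sc i k j = 0.
  have row_le0 b : mu b != mu i -> \sum_(d | mu d != mu i) sc i b d * sc i d b <= 0.
    by move=> mu_bi; apply: sumr_le0 => d; apply: sc_prod_le0.
  have row0 := nonpos_sum_ge0_eq0 row_le0 (tr_ge0 i).
  have mu_ji : mu j != mu i by rewrite eq_sym.
  have mu_ki : mu k != mu i by rewrite eq_sym.
  apply: (nonpos_sum_ge0_eq0 (P := fun d => mu d != mu i)
    (F := fun d => sc i j d * sc i d j) _ _ mu_ki).
    by move=> d; apply: sc_prod_le0.
  by rewrite row0.
have := sc_prod_distinct mu_ij mu_jk mu_ik; rewrite sc0 mulr0 mul0r => /esym/eqP.
by rewrite oppr_eq0 sqrf_eq0 => /eqP.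
Qed.

End EigenCoordinates.

Section Compression.
Variables (R : realType) (V : vectType R) (br : V -> V -> V) (h m : {vspace V}).
Variables (ip A : V -> V -> R) (Lam : V -> V -> V).
Hypotheses (br_lie : lie_bracket br) (ip_inner : inner_product_on m ip)
  (A_sym : symmetric_on m A) (Lam_lc : levi_civita br h m ip Lam)
  (A_codazzi : codazzi m Lam A).
Variables (n : nat) (e : 'I_n -> V) (mu : 'I_n -> R).
Hypotheses (e_m : forall i, e i \in m)
  (e_eig : forall i, {in m, forall y, A (e i) y = mu i * ip (e i) y})
  (e_exp : {in m, forall y, \sum_i ip y (e i) *: e i = y}).
Variable a : 'I_n.

Local Notation sc := (sc br h m ip e).
Local Notation L := (adm h m br_lie (e a)).
Local Notation eigen_orthogonal := (eigen_orthogonal ip_inner A_sym e_m e_eig).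
Local Notation ip_sym := (ip_sym ip_inner).
Local Notation ipDr := (ipDr ip_inner).
Local Notation ipZr := (ipZr ip_inner).
Local Notation ipZl := (ipZl ip_inner).
Local Notation ipBl := (ipBl ip_inner).
Local Notation ip_suml := (ip_suml ip_inner).
Local Notation sc_eigen_eq0 := (sc_eigen_eq0 br_lie ip_inner A_sym Lam_lc A_codazzi e_m e_eig).

Lemma compl_proj_linear :
  linear (fun v => v - \sum_(c | mu c == mu a) ip (e c) v *: e c).
Proof.
move=> x u v; rewrite scalerBr addrACA -opprD scaler_sumr -big_split /=.
by congr (_ - _); apply: eq_bigr => c _; rewrite ipDr ipZr scalerDl scalerA.
Qed.

Definition compl_proj : 'End(V) := lfun_of compl_proj_linear.

Definition compressed_ad : 'End(V) := (compl_proj \o L)%VF.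

Definition compl_basis := [seq e b | b <- enum [pred b | mu b != mu a]].

Lemma compl_projE v : compl_proj v = v - \sum_(c | mu c == mu a) ip (e c) v *: e c.
Proof. exact: lfun_ofE. Qed.

Lemma compl_proj_mem v : v \in m -> compl_proj v \in m.
Proof. by move=> vm; rewrite compl_projE memvB // memv_suml // => c _; rewrite memvZ. Qed.

Lemma compl_proj_expand u : u \in m ->
  compl_proj u = \sum_(b | mu b != mu a) ip u (e b) *: e b.
Proof.
move=> um; rewrite compl_projE {1}(esym (e_exp um)) (bigID (fun b => mu b == mu a)) /=.
have -> : \sum_(c | mu c == mu a) ip (e c) u *: e c =
          \sum_(c | mu c == mu a) ip u (e c) *: e c.
  by apply: eq_bigr => c _; rewrite ip_sym.
by rewrite addrAC subrr add0r.
Qed.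

Lemma compl_proj_compl b : mu b != mu a -> compl_proj (e b) = e b.
Proof.
move=> mu_ba; rewrite compl_projE big1 ?subr0 // => c /eqP mu_ca.
by rewrite eigen_orthogonal ?scale0r // mu_ca eq_sym.
Qed.

Lemma ip_compl_proj v d : mu d != mu a -> ip (compl_proj v) (e d) = ip v (e d).
Proof.
move=> mu_da; rewrite compl_projE ipBl ip_suml big1 ?subr0 // => c /eqP mu_ca.
by rewrite ipZl eigen_orthogonal ?mulr0 // mu_ca eq_sym.
Qed.

Lemma compl_proj_ad_eigen b : mu b = mu a -> compl_proj (L (e b)) = 0.
Proof.
move=> mu_ba; rewrite admE compl_proj_expand ?brm_mem // big1 // => d mu_da.
have mu_bd : mu b != mu d by rewrite mu_ba eq_sym.
by have := sc_eigen_eq0 (esym mu_ba) mu_bd; rewrite /sc => ->; rewrite scale0r.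
Qed.

Lemma compressed_ad_proj u : u \in m -> compressed_ad (compl_proj u) = compl_proj (L u).
Proof.
move=> um; have -> : compl_proj u = u - \sum_(c | mu c == mu a) ip (e c) u *: e c.
  exact: compl_projE.
rewrite comp_lfunE !linearB !linear_sum /= big1 ?subr0 ?addr0 // => c /eqP mu_ca.
by rewrite !linearZ /= compl_proj_ad_eigen // oppr0 scaler0.
Qed.

Lemma sum_compl_basis (M : nmodType) (F : V -> M) :
  \sum_(x <- compl_basis) F x = \sum_(b | mu b != mu a) F (e b).
Proof. by rewrite big_map big_enum_cond /=; apply: eq_bigl => b; rewrite inE andbT. Qed.

Lemma compl_basis_frame : parseval_frame ip (compl_proj @: m) compl_basis.
Proof.
split=> [x /mapP [b] | _ /memv_imgP [u um ->]].
  by rewrite mem_enum inE => mu_ba ->; rewrite -(compl_proj_compl mu_ba) memv_img.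
rewrite /frame_expand sum_compl_basis [RHS]compl_proj_expand //.
by apply: eq_bigr => b mu_ba; rewrite ip_compl_proj.
Qed.

Lemma frame_trace_sqr_compl_basis :
  frame_trace_sqr ip compressed_ad compl_basis = compressed_trace_sqr br h m ip e mu a.
Proof.
rewrite /frame_trace_sqr sum_compl_basis; apply: eq_bigr => b mu_ba.
rewrite sum_compl_basis; apply: eq_bigr => d mu_da.
by rewrite !comp_lfunE !ip_compl_proj // !admE.
Qed.

Lemma compressed_trace_sqr_ge0 N p : adapted_flag m L N p ->
  0 <= compressed_trace_sqr br h m ip e mu a.
Proof.
case=> N0 Np N_ok N_step; rewrite -frame_trace_sqr_compl_basis.
have N_m i : (i <= p)%N -> (N i <= m)%VS by case/N_ok.
pose W i := (compl_proj @: N i)%VS.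
have QW i : (i <= p)%N -> (compressed_ad @: W i = compl_proj @: (L @: N i))%VS.
  move=> i_le; rewrite -!limg_comp; apply: eq_in_limg => u uN.
  by rewrite [LHS]comp_lfunE [RHS]comp_lfunE compressed_ad_proj // (subvP (N_m i i_le)).
have QW_sub i : (i <= p)%N -> (compressed_ad @: W i <= W i)%VS.
  by move=> i_le; rewrite QW // limgS //; case/N_ok: i_le.
apply: (flag_frame_trace_sqr_ge0 ip_inner (W := W) (p := p)).
- by rewrite /W Np limg0.
- move=> i i_le; apply/subvP => _ /memv_imgP [u uN ->].
  by rewrite compl_proj_mem // (subvP (N_m i i_le)).
- by move=> i i_lt; apply: limgS; case: (N_step i i_lt).
- move=> i Y i_lt /andP [WY YW]; have [N_S [dN|LN]] := N_step i i_lt.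
    have := @subv_between_dim _ _ _ Y _ (introT andP (conj WY YW)).
    by case/(_ (dim_limg_step _ N_S dN)) => ->; apply: QW_sub; lia.
  apply: subv_trans (limgS _ YW) _; rewrite QW 1?ltnW //.
  exact: subv_trans (limgS _ LN) WY.
- by rewrite /W N0; apply: compl_basis_frame.
Qed.

End Compression.

Unset Implicit Arguments.

Theorem proposition2p3 (R : realType) (V : vectType R)
  (br : V -> V -> V) (h m : {vspace V})
  (ip A : V -> V -> R) (Lam : V -> V -> V) :
  lie_bracket br ->
  reductive_decomposition br h m ->
  inner_product_on m ip -> ad_h_invariant br h m ip ->
  bilinear_form A -> symmetric_on m A -> ad_h_invariant br h m A ->
  levi_civita br h m ip Lam ->
  codazzi m Lam A ->
  essential m (brm br h m) ip Lam A ->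
  ~ nilpotent_alg m (brm br h m) /\ ~ split_solvable_alg m (brm br h m).
Proof.
move=> br_lie _ ip_inner _ A_bil A_sym _ Lam_lc A_codazzi.
move=> [[x [y [z [xm ym zm nabla_xyz]]]] _].
have [n [e [mu [e_m e_eig e_exp]]]] := eigenbasis_exists ip_inner A_bil A_sym.
suff flags_parallel :
    (forall a, exists N p, adapted_flag m (adm h m br_lie (e a)) N p) -> False.
  split=> [nil|solv]; apply: flags_parallel => a.
    exact: nilpotent_adapted_flag (e_m a) nil.
  exact: split_solvable_adapted_flag (e_m a) solv.
move=> flags; move/eqP: nabla_xyz; apply.
apply: (nablaA_eq0 br_lie ip_inner A_bil Lam_lc e_m e_exp) => //.
apply: (nablaA_basis_eq0 br_lie ip_inner A_sym Lam_lc A_codazzi e_m e_eig) => a.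
have [N [p flagN]] := flags a.
exact: (compressed_trace_sqr_ge0 ip_inner A_sym Lam_lc A_codazzi e_m e_eig e_exp flagN).
Qed.
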